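(* For every $\delta\in\mathcal{D}^{LSL}$, Gini's gamma, Spearman's footrule and Blomqvist's beta of $S_\delta$ are given by $$\gamma(S_\delta)=4\int_{[0,\frac12]}\Big(\delta(x)+x\tfrac{\delta(1-x)}{1-x}\Big)\,d\lambda(x)+4\int_{[\frac12,1]}\tfrac{\delta(x)}{x}\,d\lambda(x)-2,$$ $$\phi(S_\delta)=6\int_{[0,1]}\delta(x)\,d\lambda(x)-2,\qquad \beta(S_\delta)=4\,\delta(\tfrac12)-1,$$ and they fulfill $\gamma(S_\delta),\phi(S_\delta),\beta(S_\delta)\in[0,1]$.
   Context: $\lambda$ is Lebesgue measure on $[0,1]$. Let $\mathcal{D}$ be the set of all functions $\delta:[0,1]\to[0,1]$ with $\delta(u)\le u$, $\delta(1)=1$, $\delta$ non-decreasing and 2-Lipschitz. Let $\mathcal{D}^{LSL}$ be the set of $\delta\in\mathcal{D}$ such that $x\mapsto\delta(x)/x$ is non-decreasing and $x\mapsto\delta(x)/x^2$ is non-increasing on $(0,1]$. For $\delta\in\mathcal{D}^{LSL}$, $S_\delta(x,y)=y\,\delta(x)/x$ if $y\le x$ and $x\,\delta(y)/y$ otherwise (convention $0/0:=0$); it is a copula. For a copula $C$: Gini's gamma $\gamma(C)=4\int_{[0,1]}C(x,x)\,d\lambda(x)+4\int_{[0,1]}C(x,1-x)\,d\lambda(x)-2$, Spearman's footrule $\phi(C)=6\int_{[0,1]}C(x,x)\,d\lambda(x)-2$, Blomqvist's beta $\beta(C)=4C(\tfrac12,\tfrac12)-1$. *)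

From HB Require Import structures.
From mathcomp Require Import all_boot all_order all_algebra.
From mathcomp Require Import all_classical all_reals all_analysis.
Set Implicit Arguments. Unset Strict Implicit. Unset Printing Implicit Defensive.
Import Order.TTheory GRing.Theory Num.Theory.
Local Open Scope classical_set_scope.
Local Open Scope ring_scope.

Section Defs.
Variable R : realType.

Definition in_D (delta : R -> R) : Prop :=
  (forall u, 0 <= u <= 1 -> 0 <= delta u <= 1) /\
  (forall u, 0 <= u <= 1 -> delta u <= u) /\
  delta 1 = 1 /\
  (forall u v, 0 <= u -> u <= v -> v <= 1 -> delta u <= delta v) /\
  (forall u v, 0 <= u <= 1 -> 0 <= v <= 1 -> `|delta u - delta v| <= 2 * `|u - v|).

Definition in_DLSL (delta : R -> R) : Prop :=
  in_D delta /\
  (forall x y, 0 < x -> x <= y -> y <= 1 -> delta x / x <= delta y / y) /\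
  (forall x y, 0 < x -> x <= y -> y <= 1 -> delta y / (y ^+ 2) <= delta x / (x ^+ 2)).

(* S_delta; note that in MathComp 0^-1 = 0, hence 0/0 = 0 as in the paper. *)
Definition S_delta (delta : R -> R) (x y : R) : R :=
  if y <= x then y * delta x / x else x * delta y / y.

Definition lam := (@lebesgue_measure R).

Definition gini_gamma (C : R -> R -> R) : \bar R :=
  (4%:E * \int[lam]_(x in `[0%R, 1%R]) (C x x)%:E
   + 4%:E * \int[lam]_(x in `[0%R, 1%R]) (C x (1 - x))%:E - 2%:E)%E.

Definition spearman_footrule (C : R -> R -> R) : \bar R :=
  (6%:E * \int[lam]_(x in `[0%R, 1%R]) (C x x)%:E - 2%:E)%E.

Definition blomqvist_beta (C : R -> R -> R) : R :=
  4 * C (1 / 2) (1 / 2) - 1.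

End Defs.

From HB Require Import structures.
From mathcomp Require Import all_boot all_order all_algebra.
From mathcomp Require Import all_classical all_reals all_analysis.
From mathcomp Require Import ring lra measurable_realfun.
Import Order.TTheory GRing.Theory Num.Theory numFieldNormedType.Exports.
Local Open Scope classical_set_scope.
Local Open Scope ring_scope.

(* On the diagonal S_delta(x, x) = delta(x); on the anti-diagonal S_delta(x, 1 - x)
   is x delta(1-x)/(1-x) for x <= 1/2 and (1 - x) delta(x)/x for x >= 1/2.  Splitting
   the integrals at 1/2 and writing (1 - x) delta(x)/x = delta(x)/x - delta(x) gives
   the three formulas.  Since delta(x)/x^2 is non-increasing and delta(1) = 1, we
   have x^2 <= delta(x) <= x, hence x <= delta(x)/x <= 1; integrating these
   polynomial bounds puts each integral, and hence each coefficient, in [0, 1]. *)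

Section interval_integrals.
Context {R : realType}.

Lemma nondecreasing_itv_measurable (a b : R) (f : R -> R) :
  {in `[a, b] &, {homo f : x y / x <= y}} -> measurable_fun `[a, b] f.
Proof.
move=> f_nd; have [ab|ba] := leP a b; last first.
  by rewrite set_itv_ge ?bnd_simp -?ltNge //; exact: measurable_fun_set0.
pose clamp x := if x <= a then a else if x <= b then x else b.
have clamp_itv x : clamp x \in `[a, b].
  rewrite /clamp in_itv /=; case: (leP x a) => xa; first by rewrite lexx ab.
  by case: (leP x b) => xb; apply/andP; split; lra.
have clamp_nd : {homo clamp : x y / x <= y}.
  move=> x y xy; rewrite /clamp.
  by case: (leP x a); case: (leP y a); case: (leP x b); case: (leP y b); lra.
apply: (eq_measurable_fun (f \o clamp)).
  move=> x; rewrite inE /= in_itv /= => /andP[ax xb].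
  rewrite /clamp xb; case: (leP x a) => // xa.
  by congr f; apply/eqP; rewrite eq_le ax xa.
apply: nondecreasing_measurable => // x y xy /=.
by apply: f_nd; rewrite ?clamp_itv ?clamp_nd.
Qed.

Lemma nonincreasing_itv_measurable (a b : R) (f : R -> R) :
  {in `[a, b] &, {homo f : x y /~ x <= y}} -> measurable_fun `[a, b] f.
Proof.
move=> f_ni; rewrite -(opprK f); apply/measurable_funN.
by apply: nondecreasing_itv_measurable => x y xab yab xy /=; rewrite lerN2 f_ni.
Qed.

Lemma integral_itv_monomial (a b c : R) (n : nat) : a < b ->
  (\int[@lam R]_(x in `[a, b]) (c * x ^+ n)%:E =
    (c / n.+1%:R * (b ^+ n.+1 - a ^+ n.+1))%:E)%E.
Proof.
move=> ab; pose F := (c / n.+1%:R) \*: @id R ^+ n.+1.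
have F' (x : R) : is_derive x (1 : R) F (c * x ^+ n).
  apply: is_derive_eq.
  by rewrite /GRing.scale /= mulr1 mulrA divfK // pnatr_eq0.
have cF : continuous F.
  by move=> x; apply/differentiable_continuous/derivable1_diffP; case: (F' x).
rewrite (@continuous_FTC2 _ _ F _ _ ab); last first.
- by move=> x _; rewrite derive1E; case: (F' x).
- split; first by move=> x _; case: (F' x).
  + exact/cvg_at_right_filter/cF.
  + exact/cvg_at_left_filter/cF.
- apply: continuous_subspaceT => x.
  by apply: cvgM; [exact: cvg_cst | exact: exprn_continuous].
by rewrite -EFinB /F /= /GRing.scale /= !exprfctE mulrBr.
Qed.

Lemma ge0_integral_itv_split (a c b : R) (f : R -> \bar R) : a <= c -> c <= b ->
  measurable_fun `[a, c] f -> measurable_fun `[c, b] f ->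
  (forall x, a <= x <= b -> (0 <= f x)%E) ->
  (\int[@lam R]_(x in `[a, b]) f x =
    \int[@lam R]_(x in `[a, c]) f x + \int[@lam R]_(x in `[c, b]) f x)%E.
Proof.
move=> ac cb mf_ac mf_cb f0.
have ac_sub : `[a, c[ `<=` `[a, c] by apply: subset_itvl; rewrite bnd_simp.
have abE : `[a, b]%classic = `[a, c[%classic `|` `[c, b]%classic :> set R.
  by rewrite (@itv_bndbnd_setU _ _ _ (BLeft c)) // bnd_simp.
rewrite abE ge0_integral_setU //.
- by rewrite integral_itv_bndo_bndc //; apply: measurable_funS mf_ac.
- by apply/measurable_funU => //; split => //; apply: measurable_funS mf_ac.
- by rewrite -abE => x /=; rewrite in_itv /=; apply: f0.
- apply/disj_setPS => x [/=]; rewrite !in_itv /= => /andP[_ xc] /andP[cx _].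
  by move: (lt_le_trans xc cx); rewrite ltxx.
Qed.

Lemma integral_itv_monomial_sandwich (a b c d : R) (m n : nat) (f : R -> R) :
  a < b -> measurable_fun `[a, b] f ->
  (forall x, a <= x <= b -> 0 <= c * x ^+ m <= f x /\ f x <= d * x ^+ n) ->
  exists2 r : R, (\int[@lam R]_(x in `[a, b]) (f x)%:E = r%:E)%E &
    c / m.+1%:R * (b ^+ m.+1 - a ^+ m.+1) <= r <= d / n.+1%:R * (b ^+ n.+1 - a ^+ n.+1).
Proof.
move=> ab mf f_bnd.
have f_bnd_itv x : `[a, b]%classic x -> [/\ 0 <= c * x ^+ m, c * x ^+ m <= f x & f x <= d * x ^+ n].
  by rewrite /= in_itv /= => /f_bnd [/andP[]].
have lo : ((c / m.+1%:R * (b ^+ m.+1 - a ^+ m.+1))%:E <= \int[@lam R]_(x in `[a, b]) (f x)%:E)%E.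
  rewrite -integral_itv_monomial //; apply: ge0_le_integral => //.
  - by move=> x /f_bnd_itv []; rewrite lee_fin.
  - apply/measurable_EFinP/measurable_funM => //; exact: exprn_measurable.
  - exact/measurable_EFinP.
  - by move=> x /f_bnd_itv []; rewrite lee_fin.
have hi : (\int[@lam R]_(x in `[a, b]) (f x)%:E <= (d / n.+1%:R * (b ^+ n.+1 - a ^+ n.+1))%:E)%E.
  rewrite -integral_itv_monomial //; apply: ge0_le_integral => //.
  - by move=> x /f_bnd_itv [c0 cf _]; rewrite lee_fin (le_trans c0 cf).
  - exact/measurable_EFinP.
  - apply/measurable_EFinP/measurable_funM => //; exact: exprn_measurable.
  - by move=> x /f_bnd_itv []; rewrite lee_fin.
move: lo hi; case: (\int[@lam R]_(x in _) _)%E => // r; rewrite !lee_fin => lo hi.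
by exists r; rewrite ?lo ?hi.
Qed.

End interval_integrals.

Section lsl_copula.
Context {R : realType} (delta : R -> R).

Lemma S_delta_le (x y : R) : x <= y -> S_delta delta x y = x * (delta y / y).
Proof.
rewrite /S_delta; case: ifPn => [yx xy | _ _]; last by rewrite mulrA.
have y_eq_x : y = x by apply/eqP; rewrite eq_le yx xy.
by rewrite y_eq_x mulrA.
Qed.

Lemma S_delta_ge (x y : R) : y <= x -> S_delta delta x y = y * (delta x / x).
Proof. by move=> yx; rewrite /S_delta yx mulrA. Qed.

Lemma S_delta_antidiag_left (x : R) : 0 <= x <= 1 / 2 ->
  S_delta delta x (1 - x) = x * (delta (1 - x) / (1 - x)).
Proof. by case/andP=> _ x_half; rewrite S_delta_le //; lra. Qed.

Lemma S_delta_antidiag_right (x : R) : 1 / 2 <= x <= 1 ->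
  S_delta delta x (1 - x) = (1 - x) * (delta x / x).
Proof. by case/andP=> half_x _; rewrite S_delta_ge //; lra. Qed.

Hypothesis delta_LSL : in_DLSL delta.

Lemma delta_ge0 (x : R) : 0 <= x <= 1 -> 0 <= delta x.
Proof. by case: delta_LSL => [[d01 _] _] /d01 /andP[]. Qed.

Lemma delta_le_id (x : R) : 0 <= x <= 1 -> delta x <= x.
Proof. by case: delta_LSL => [[_ [dle _]] _]; apply: dle. Qed.

Lemma sqr_le_delta (x : R) : 0 <= x <= 1 -> x ^+ 2 <= delta x.
Proof.
case: delta_LSL => [[_ [_ [d1 _]]] [_ dsq]] x01; have /andP[x0 x1] := x01.
have [->|x_neq0] := eqVneq x 0; first by rewrite expr2 mul0r delta_ge0 // lexx ler01.
have x_gt0 : 0 < x by rewrite lt_def x_neq0.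
by move: (dsq x 1 x_gt0 x1 (lexx 1)); rewrite d1 expr1n divr1 ler_pdivlMr ?exprn_gt0 // mul1r.
Qed.

Lemma delta_ratio_ge0 (x : R) : 0 <= x <= 1 -> 0 <= delta x / x.
Proof. by move=> x01; rewrite divr_ge0 ?delta_ge0 //; case/andP: x01. Qed.

Lemma delta_ratio_bounds (x : R) : 0 < x <= 1 -> x <= delta x / x <= 1.
Proof.
case/andP=> x0 x1; have x01 : 0 <= x <= 1 by rewrite ltW.
by rewrite ler_pdivlMr // ler_pdivrMr // mul1r delta_le_id // andbT -expr2 sqr_le_delta.
Qed.

Lemma S_delta_diag (x : R) : 0 <= x <= 1 -> S_delta delta x x = delta x.
Proof.
move=> x01; rewrite S_delta_le //.
have [x0|x_neq0] := eqVneq x 0; last by rewrite mulrCA divff // mulr1.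
have zero01 : 0 <= (0 : R) <= 1 by rewrite lexx ler01.
by rewrite x0 mul0r; apply/eqP; rewrite eq_le delta_ge0 // delta_le_id.
Qed.

Lemma measurable_delta (a b : R) : 0 <= a -> b <= 1 -> measurable_fun `[a, b] delta.
Proof.
case: delta_LSL => [[_ [_ [_ [dmono _]]]] _] a0 b1.
apply: nondecreasing_itv_measurable => x y.
by rewrite !in_itv /= => /andP[ax _] /andP[_ yb] xy; apply: dmono; lra.
Qed.

Lemma measurable_delta_ratio (a : R) : 0 < a ->
  measurable_fun `[a, 1] (fun x => delta x / x).
Proof.
case: delta_LSL => [_ [dinc _]] a0; apply: nondecreasing_itv_measurable => x y.
rewrite !in_itv /= => /andP[ax _] /andP[_ y1] xy.
by apply: dinc => //; apply: lt_le_trans ax.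
Qed.

Lemma measurable_delta_ratio_reflected (b : R) : b < 1 ->
  measurable_fun `[0, b] (fun x => delta (1 - x) / (1 - x)).
Proof.
case: delta_LSL => [_ [dinc _]] b1; apply: nonincreasing_itv_measurable => x y.
by rewrite !in_itv /= => /andP[_ xb] /andP[y0 _] yx; apply: dinc; lra.
Qed.

Lemma measurable_antidiag_left :
  measurable_fun (`[0, 1 / 2] : set R) (fun x => x * (delta (1 - x) / (1 - x))).
Proof. by apply: measurable_funM => //; apply: measurable_delta_ratio_reflected; lra. Qed.

Lemma measurable_antidiag_right :
  measurable_fun (`[1 / 2, 1] : set R) (fun x => (1 - x) * (delta x / x)).
Proof.
apply: measurable_funM; first exact: measurable_funB.
by apply: measurable_delta_ratio; lra.
Qed.

Lemma integral_S_delta_diag :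
  (\int[@lam R]_(x in `[0%R, 1%R]) (S_delta delta x x)%:E =
   \int[@lam R]_(x in `[0%R, 1%R]) (delta x)%:E)%E.
Proof. by apply: eq_integral => x; rewrite inE /= in_itv /= => /S_delta_diag ->. Qed.

Lemma integral_S_delta_antidiag :
  (\int[@lam R]_(x in `[0%R, 1%R]) (S_delta delta x (1 - x))%:E =
   \int[@lam R]_(x in `[0%R, (1 / 2)%R]) (x * (delta (1 - x) / (1 - x)))%:E +
   \int[@lam R]_(x in `[(1 / 2)%R, 1%R]) ((1 - x) * (delta x / x))%:E)%E.
Proof.
rewrite (@ge0_integral_itv_split _ 0 (1 / 2) 1); [| lra | lra | | |].
- congr (_ + _)%E; apply: eq_integral => x; rewrite inE /= in_itv /=.
    by move=> /S_delta_antidiag_left ->.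
  by move=> /S_delta_antidiag_right ->.
- apply/measurable_EFinP; apply: eq_measurable_fun measurable_antidiag_left.
  by move=> x; rewrite inE /= in_itv /= => /S_delta_antidiag_left ->.
- apply/measurable_EFinP; apply: eq_measurable_fun measurable_antidiag_right.
  by move=> x; rewrite inE /= in_itv /= => /S_delta_antidiag_right ->.
move=> x /andP[x0 x1]; rewrite lee_fin; have [x_half|half_x] := leP x (1 / 2).
  rewrite S_delta_antidiag_left; last by apply/andP; split.
  by rewrite mulr_ge0 // delta_ratio_ge0 //; apply/andP; split; lra.
rewrite S_delta_antidiag_right; last by apply/andP; split; lra.
by rewrite mulr_ge0 ?delta_ratio_ge0 //; [lra | apply/andP; split].
Qed.

Lemma gini_gamma_S_delta : gini_gamma (S_delta delta) =
  (4%:E * \int[@lam R]_(x in `[0%R, (1 / 2)%R]) (delta x + x * (delta (1 - x) / (1 - x)))%:E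
   + 4%:E * \int[@lam R]_(x in `[(1 / 2)%R, 1%R]) (delta x / x)%:E - 2%:E)%E.
Proof.
have delta_left x : `[0, 1 / 2]%classic x -> 0 <= delta x.
  by rewrite /= in_itv /= => /andP[x0 x_half]; rewrite delta_ge0 //; apply/andP; split; lra.
have delta_right x : `[1 / 2, 1]%classic x -> 0 <= delta x.
  by rewrite /= in_itv /= => /andP[half_x x1]; rewrite delta_ge0 //; apply/andP; split; lra.
have anti_left x : `[0, 1 / 2]%classic x -> 0 <= x * (delta (1 - x) / (1 - x)).
  rewrite /= in_itv /= => /andP[x0 x_half].
  by rewrite mulr_ge0 // delta_ratio_ge0 //; apply/andP; split; lra.
have anti_right x : `[1 / 2, 1]%classic x -> 0 <= (1 - x) * (delta x / x).
  rewrite /= in_itv /= => /andP[half_x x1].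
  by rewrite mulr_ge0 ?delta_ratio_ge0 //; [lra | apply/andP; split; lra].
have split_delta : (\int[@lam R]_(x in `[0%R, 1%R]) (delta x)%:E =
    \int[@lam R]_(x in `[0%R, (1 / 2)%R]) (delta x)%:E +
    \int[@lam R]_(x in `[(1 / 2)%R, 1%R]) (delta x)%:E)%E.
  apply: ge0_integral_itv_split; [lra | lra | | |].
  - by apply/measurable_EFinP; apply: measurable_delta; lra.
  - by apply/measurable_EFinP; apply: measurable_delta; lra.
  - by move=> x x01; rewrite lee_fin delta_ge0.
have sum_left : (\int[@lam R]_(x in `[0%R, (1 / 2)%R]) (delta x + x * (delta (1 - x) / (1 - x)))%:E =
    \int[@lam R]_(x in `[0%R, (1 / 2)%R]) (delta x)%:E +
    \int[@lam R]_(x in `[0%R, (1 / 2)%R]) (x * (delta (1 - x) / (1 - x)))%:E)%E.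
  rewrite -ge0_integralD //.
  - by apply/measurable_EFinP; apply: measurable_delta; lra.
  - by apply/measurable_EFinP; apply: measurable_antidiag_left.
have sum_right : (\int[@lam R]_(x in `[(1 / 2)%R, 1%R]) (delta x / x)%:E =
    \int[@lam R]_(x in `[(1 / 2)%R, 1%R]) (delta x)%:E +
    \int[@lam R]_(x in `[(1 / 2)%R, 1%R]) ((1 - x) * (delta x / x))%:E)%E.
  rewrite -ge0_integralD //.
  - apply: eq_integral => x; rewrite inE /= in_itv /= => /andP[half_x _].
    have x_neq0 : x != 0 by apply: lt0r_neq0; lra.
    by rewrite -EFinD; congr EFin; field.
  - by apply/measurable_EFinP; apply: measurable_delta; lra.
  - by apply/measurable_EFinP; apply: measurable_antidiag_right.
have int_ge0 a b (f : R -> R) : (forall x, `[a, b]%classic x -> 0 <= f x) ->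
    (0 <= \int[@lam R]_(x in `[a, b]) (f x)%:E)%E.
  by move=> f0; apply: integral_ge0 => x /f0; rewrite lee_fin.
rewrite /gini_gamma integral_S_delta_diag integral_S_delta_antidiag.
rewrite split_delta sum_left sum_right.
have A1 := int_ge0 _ _ _ delta_left; have A2 := int_ge0 _ _ _ delta_right.
have B1 := int_ge0 _ _ _ anti_left; have B2 := int_ge0 _ _ _ anti_right.
rewrite (ge0_muleDr _ A1 A2) (ge0_muleDr _ B1 B2).
by rewrite (ge0_muleDr _ A1 B1) (ge0_muleDr _ A2 B2) addeACA.
Qed.

Lemma spearman_footrule_S_delta : spearman_footrule (S_delta delta) =
  (6%:E * \int[@lam R]_(x in `[0%R, 1%R]) (delta x)%:E - 2%:E)%E.
Proof. by rewrite /spearman_footrule integral_S_delta_diag. Qed.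

Lemma blomqvist_beta_S_delta : blomqvist_beta (S_delta delta) = 4 * delta (1 / 2) - 1.
Proof. by rewrite /blomqvist_beta S_delta_diag //; apply/andP; split; lra. Qed.

Lemma integral_delta_bounds : exists2 r : R,
  (\int[@lam R]_(x in `[0%R, 1%R]) (delta x)%:E = r%:E)%E & 1 / 3 <= r <= 1 / 2.
Proof.
have [|r r_eq] := @integral_itv_monomial_sandwich _ 0 1 1 1 2 1 delta ltr01
    (measurable_delta _ _ (lexx 0) (lexx 1)).
  by move=> x x01; rewrite !mul1r sqr_ge0 sqr_le_delta // delta_le_id.
rewrite !expr1n !expr0n /= !subr0 !mulr1 => r_bnd.
by exists r.
Qed.

Lemma integral_gini_left_bounds : exists2 r : R,
  (\int[@lam R]_(x in `[0%R, (1 / 2)%R]) (delta x + x * (delta (1 - x) / (1 - x)))%:E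
    = r%:E)%E & 1 / 8 <= r <= 1 / 4.
Proof.
have [|||r r_eq] := @integral_itv_monomial_sandwich _ 0 (1 / 2) 1 2 1 1
    (fun x => delta x + x * (delta (1 - x) / (1 - x))).
- lra.
- by apply: measurable_funD measurable_antidiag_left; apply: measurable_delta; lra.
- move=> x /andP[x0 x_half].
  have x01 : 0 <= x <= 1 by apply/andP; split; lra.
  have /andP[ratio_lo ratio_hi] : 1 - x <= delta (1 - x) / (1 - x) <= 1.
    by apply: delta_ratio_bounds; apply/andP; split; lra.
  have := sqr_le_delta _ x01; have := delta_le_id _ x01.
  by rewrite expr1 mul1r x0 => delta_le delta_ge; split; nra.
move=> r_bnd; exists r => //; move: r_bnd.
rewrite !exprS !expr0 !mulr1 => /andP[r_lo r_hi].
by apply/andP; split; lra.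
Qed.

Lemma integral_gini_right_bounds : exists2 r : R,
  (\int[@lam R]_(x in `[(1 / 2)%R, 1%R]) (delta x / x)%:E = r%:E)%E & 3 / 8 <= r <= 1 / 2.
Proof.
have [|||r r_eq] := @integral_itv_monomial_sandwich _ (1 / 2) 1 1 1 1 0 (fun x => delta x / x).
- lra.
- by apply: measurable_delta_ratio; lra.
- move=> x /andP[half_x x1].
  have /andP[ratio_lo ratio_hi] : x <= delta x / x <= 1.
    by apply: delta_ratio_bounds; apply/andP; split; lra.
  by rewrite expr1 expr0 !mul1r ratio_lo ratio_hi /=; lra.
move=> r_bnd; exists r => //; move: r_bnd.
rewrite !exprS !expr0 !mulr1 => /andP[r_lo r_hi].
by apply/andP; split; lra.
Qed.

Lemma delta_half_bounds : 1 / 4 <= delta (1 / 2) <= 1 / 2.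
Proof.
have half01 : 0 <= (1 / 2 : R) <= 1 by apply/andP; split; lra.
have := sqr_le_delta _ half01; have := delta_le_id _ half01.
by rewrite expr2 => hi lo; apply/andP; split; lra.
Qed.

End lsl_copula.

Theorem mainTheorem12 (R : realType) (delta : R -> R) :
  in_DLSL delta ->
  gini_gamma (S_delta delta) =
    (4%:E * \int[@lam R]_(x in `[0%R, (1 / 2)%R]) (delta x + x * (delta (1 - x) / (1 - x)))%:E
     + 4%:E * \int[@lam R]_(x in `[(1 / 2)%R, 1%R]) (delta x / x)%:E - 2%:E)%E /\
  spearman_footrule (S_delta delta) =
    (6%:E * \int[@lam R]_(x in `[0%R, 1%R]) (delta x)%:E - 2%:E)%E /\
  blomqvist_beta (S_delta delta) = 4 * delta (1 / 2) - 1 /\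
  (0 <= gini_gamma (S_delta delta) <= 1)%E /\
  (0 <= spearman_footrule (S_delta delta) <= 1)%E /\
  0 <= blomqvist_beta (S_delta delta) <= 1.
Proof.
move=> delta_LSL.
rewrite gini_gamma_S_delta // spearman_footrule_S_delta // blomqvist_beta_S_delta //.
do 3 (split; first by []).
have [r_left -> /andP[left_lo left_hi]] := integral_gini_left_bounds _ delta_LSL.
have [r_right -> /andP[right_lo right_hi]] := integral_gini_right_bounds _ delta_LSL.
have [r_diag -> /andP[diag_lo diag_hi]] := integral_delta_bounds _ delta_LSL.
have /andP[half_lo half_hi] := delta_half_bounds _ delta_LSL.
rewrite -!EFinM -EFinD -!EFinB !lee_fin.
by split; [|split]; apply/andP; split; lra.
Qed.
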